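(* Assume A1, A2 and A3(iii) with constant $K<1$. Then for every $\alpha\in(0,-\log_\rho K)$, $$\rho^{\alpha n}\,\mathbb E\bigl(|\bm Z_n|^{-1}\bigr)\to 0\quad\text{as } n\to\infty.$$
   Context: Fix an integer $l\ge 2$, let $\mathbb N=\{0,1,2,\dots\}$, and for $\bm x\in\mathbb R^l$ let $|\bm x|=\sum_{i=1}^l|x_i|$. $(\bm Z_n)_{n\ge0}$ is an $l$-type Galton–Watson process started from a canonical basis vector, defined by $\bm Z_n=\sum_{j=1}^l\sum_{i=1}^{Z_{n-1,j}}\bm Y^{(j)}_{n-1,i}$ with mutually independent offspring vectors, $\bm Y^{(j)}_{n-1,i}$ having law $p_j$ on $\mathbb N^l$; $\bm Y^{(i)}$ denotes a random vector with law $p_i$. The mean matrix $M$ has entries $M_{ik}=\mathbb E(Y^{(i)}_k)$. Assumption A1: for every $j$, $p_j(\bm 0)=0$ and $\sum_{k=1}^l p_j(\bm e_k)<1$. Assumption A2: $M$ is positively regular and its largest eigenvalue $\rho$ satisfies $\rho>1$. Assumption A3(iii): there is a constant $K$ with $\mathbb E(|\bm Y^{(i)}|^{-1})\le K$ for all $i\in\{1,\dots,l\}$. *)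

From HB Require Import structures.
From mathcomp Require Import all_boot all_order all_algebra.
From mathcomp Require Import complex.
From mathcomp Require Import all_classical all_reals all_analysis.
Set Implicit Arguments. Unset Strict Implicit. Unset Printing Implicit Defensive.
Import Order.TTheory GRing.Theory Num.Theory.
Local Open Scope ring_scope.
Local Open Scope classical_set_scope.
Local Open Scope complex_scope.

Notation vecN l := {ffun 'I_l -> nat}.

Definition normN {l : nat} (x : vecN l) : nat := \sum_(k < l) x k.

Definition ebase {l : nat} (k : 'I_l) : vecN l := [ffun m => nat_of_bool (m == k)].

Definition zeroN {l : nat} : vecN l := [ffun _ => 0%N].

(* Index of an offspring vector Y^{(j)}_{n,i}: (n, j, i). *)
Notation offidx l := (nat * 'I_l * nat)%type.

(* Mutual independence of a family of discrete (N^l-valued) random vectors: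
   the product rule over every finite family of distinct indices and every
   choice of values (this is exactly mutual independence for discrete r.v.). *)
Definition mutually_independent {d} {T : measurableType d} {R : realType}
  (P : probability T R) {I : eqType} {V : Type} (X : I -> T -> V) : Prop :=
  forall (s : seq I) (v : I -> V), uniq s ->
    P (\bigcap_(k in [set k | k \in s]) [set w | X k w = v k]) =
    (\prod_(k <- s) P [set w | X k w = v k])%E.

Fixpoint GW {T : Type} {l : nat} (Y : offidx l -> T -> vecN l) (i0 : 'I_l)
  (n : nat) (w : T) : vecN l :=
  match n with
  | 0 => ebase i0
  | n'.+1 =>
      let z := GW Y i0 n' w in
      [ffun k => \sum_(j < l) \sum_(0 <= i < z j) Y (n', j, i) w k]
  end.

Definition ceigenvalue {R : realType} {l : nat} (M : 'M[R]_l) (z : R[i]) : Prop :=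
  eigenvalue (map_mx (fun x : R => x%:C) M) z.

(* rho is the largest eigenvalue of M (the spectral radius, which is an eigenvalue) *)
Definition largest_eigenvalue {R : realType} {l : nat} (M : 'M[R]_l) (rho : R) : Prop :=
  eigenvalue M rho /\ forall z : R[i], ceigenvalue M z -> `|z| <= `|rho%:C|.

Definition positively_regular {R : realType} {l : nat} (M : 'M[R]_l) : Prop :=
  exists m : nat, forall i k, 0 < (M ^+ m) i k.

From HB Require Import structures.
From mathcomp Require Import all_boot all_order all_algebra.
From mathcomp Require Import complex.
From mathcomp Require Import all_classical all_reals all_analysis.
From mathcomp Require Import measurable_realfun.
From mathcomp Require Import ring lra.
Import Order.TTheory GRing.Theory Num.Theory.
Local Open Scope ring_scope.
Local Open Scope classical_set_scope.

(* Conditionally on [Z_n = z], [Z_(n+1)] is the sum of the [|z|] offspring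
   vectors of generation [n], which are independent of [Z_n].  The
   harmonic-arithmetic mean inequality [1/(x_1 + ... + x_m) <= m^-2 sum_i 1/x_i]
   then gives [E(1/|Z_(n+1)|; Z_n = z) <= K P(Z_n = z) / |z|], whence
   [E(1/|Z_n|) <= K^n].
   Finally [rho^alpha K < 1] exactly when [alpha < - log_rho K], so
   [rho^(alpha n) E(1/|Z_n|) <= (rho^alpha K)^n -> 0].
   The independence of [Z_n] from all offspring vectors of generations [>= n] is
   proved by induction on [n], splitting [{Z_(n+1) = z}] according to the values
   of [Z_n] and of the offspring of generation [n]. *)
Section HarmonicMean.
Context {R : realFieldType}.

Lemma le2_divD_divC (x y : R) : 0 < x -> 0 < y -> 2 <= x / y + y / x.
Proof.
move=> x0 y0.
have -> : x / y + y / x = 2 + (x - y) ^+ 2 / (x * y).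
  by field; rewrite !gt_eqF.
by rewrite lerDl divr_ge0 ?sqr_ge0 // mulr_ge0 // ltW.
Qed.

Lemma sqr_size_le_sum_mul_sumV (r : seq R) : all (fun x => 0 < x) r ->
  (size r)%:R ^+ 2 <= (\sum_(x <- r) x) * (\sum_(x <- r) x^-1).
Proof.
elim: r => [|x r IH] /=; first by rewrite !big_nil mulr0 expr2 mulr0.
move=> /andP[x0 r0]; rewrite !big_cons.
set S := \sum_(x <- r) x; set H := \sum_(x <- r) x^-1; set k : R := (size r)%:R.
have cross : 2 * k <= x * H + S * x^-1.
  rewrite mulr_sumr mulr_suml -big_split /= /k -sum1_size natr_sum mulr_sumr.
  rewrite big_seq [X in _ <= X]big_seq; apply: ler_sum => y yr; rewrite mulr1.
  by apply: le2_divD_divC => //; exact: (allP r0).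
have {}IH := IH r0; rewrite -/S -/H -/k in IH.
have -> : (size r).+1%:R = k + 1 by rewrite -addn1 natrD.
have -> : (x + S) * (x^-1 + H) = x * x^-1 + (x * H + S * x^-1) + S * H by ring.
rewrite mulfV ?gt_eqF //.
move: IH cross; move: (x * H + S * x^-1) (S * H) => a b; nra.
Qed.

Definition invn_dflt (c : R) (x : nat) : R := if x == 0%N then c else x%:R^-1.

Lemma invn_dflt_ge0 c x : 0 <= c -> 0 <= invn_dflt c x.
Proof. by rewrite /invn_dflt; case: ifP => // _; rewrite invr_ge0 ler0n. Qed.

(* A zero entry is weighted by [size xs ^ 2], which makes the bound trivial;
   under A1 such entries only occur with probability zero. *)
Lemma invn_sum_le (xs : seq nat) (c := ((size xs ^ 2)%N%:R : R)) :
  ((\sum_(x <- xs) x)%N%:R)^-1 <= c^-1 * \sum_(x <- xs) invn_dflt c x.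
Proof.
have c0 : 0 <= c by rewrite ler0n.
have [/hasP[x0 x0xs /eqP x00]|/hasPn xs0] := boolP (has (pred1 0%N) xs).
  have cn0 : c != 0 by rewrite pnatr_eq0 expn_eq0 /=; case: (xs) x0xs.
  apply: (@le_trans _ _ 1).
    by case: (\sum_(_ <- _) _)%N => [|n]; rewrite ?invr0 // invf_le1 ?ler1n ?ltr0n.
  rewrite [X in _ <= _ * X](big_rem _ x0xs) /= {1}/invn_dflt x00 /= mulrDr mulVf //.
  by rewrite lerDl mulr_ge0 ?invr_ge0 ?sumr_ge0 // => x _; exact: invn_dflt_ge0.
have -> : \sum_(x <- xs) invn_dflt c x = \sum_(x <- map (fun x => x%:R) xs) x^-1.
  rewrite big_map big_seq [RHS]big_seq; apply: eq_bigr => x /xs0 /negPf.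
  by rewrite /invn_dflt /= => ->.
have := @sqr_size_le_sum_mul_sumV (map (fun x => x%:R) xs).
rewrite size_map big_map -natr_sum -natrX -/c => /(_ _)/Wrap[].
  by rewrite all_map; apply/allP => x /xs0; rewrite /= ltr0n lt0n.
move=> cs; case: (posnP (\sum_(x <- xs) x)%N) => [->|S0].
  by rewrite invr0 big_map mulr_ge0 ?invr_ge0 ?sumr_ge0 // => x _; rewrite invr_ge0.
have c_gt0 : 0 < c.
  rewrite ltr0n expn_gt0 lt0n size_eq0 orbF.
  by apply/eqP => xsnil; rewrite xsnil big_nil in S0.
rewrite -(ler_pM2l c_gt0) mulrA mulfV ?gt_eqF // mul1r ler_pdivrMr ?ltr0n //.
by rewrite mulrC.
Qed.

End HarmonicMean.

Section CountableSum.
Context {R : realType}.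
Local Open Scope ereal_scope.

Definition csum {V : countType} (b : V -> \bar R) : \bar R :=
  \sum_(k <oo) (if pickle_inv k is Some v then b v else 0).

Lemma le_csum {V : countType} (a b : V -> \bar R) :
  (forall v, 0 <= a v) -> (forall v, a v <= b v) -> csum a <= csum b.
Proof.
by move=> a0 ab; apply: lee_nneseries => [k _ _|k _]; case: pickle_inv.
Qed.

Lemma csumZl {V : countType} (b : V -> \bar R) (x : R) : (forall v, 0 <= b v) ->
  csum (fun v => x%:E * b v) = x%:E * csum b.
Proof.
move=> b0; rewrite /csum -nneseriesZl; last by move=> k _; case: pickle_inv.
by apply: eq_eseriesr => k _; case: pickle_inv; rewrite ?mule0.
Qed.

Lemma csum_esum {V : countType} (b : V -> \bar R) : (forall v, 0 <= b v) ->
  csum b = \esum_(v in setT) b v.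
Proof.
move=> b0; rewrite /csum nneseries_esumT; last by move=> k; case: pickle_inv.
rewrite (esumID (range (@pickle V))); last by move=> k _; case: pickle_inv.
rewrite [X in _ + X]esum1 ?adde0; last first.
  move=> k [_ /= nk]; case E: pickle_inv => [v|//].
  by exfalso; apply: nk; exists v => //; rewrite -(@pickle_invK V k) E.
rewrite setTI (reindex_esum setT _ (@pickle V)).
  by apply: eq_esum => v _; rewrite pickleK_inv.
split=> [v _|v w _ _ /(pcan_inj (@pickleK_inv V))//|k [v _ <-]]; by exists v.
Qed.

End CountableSum.

Section DiscretePartition.
Context {d} {T : measurableType d} {R : realType}.
Variable mu : {measure set T -> \bar R}.
Local Open Scope ereal_scope.

Lemma measure_bigcup_csum {V : countType} (G : V -> set T) :
  (forall v, measurable (G v)) ->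
  (forall v v' w, G v w -> G v' w -> v = v') ->
  mu (\bigcup_v G v) = csum (fun v => mu (G v)).
Proof.
move=> mG dG.
pose H k := if pickle_inv k is Some v then G v else set0.
have -> : \bigcup_v G v = \bigcup_(k in setT) H k.
  apply/seteqP; split => w /=.
    by move=> [v _ Gw]; exists (pickle v) => //; rewrite /H pickleK_inv.
  by move=> [k _]; rewrite /H; case: pickle_inv => // v Gw; exists v.
rewrite measure_bigcup.
- rewrite [LHS](_ : _ = \sum_(i <oo) mu (H i)); last first.
    by apply: congr_lim; apply/funext => n; apply: eq_bigl => i; rewrite in_setT.
  by rewrite /csum; apply: eq_eseriesr => k _; rewrite /H; case: pickle_inv.
- by move=> k _; rewrite /H; case: pickle_inv.
- move=> i j _ _ [w []]; rewrite /H.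
  case Ei: pickle_inv => [v|//]; case Ej: pickle_inv => [v'|//] Gv Gv'.
  have vv := dG _ _ _ Gv Gv'; subst v'.
  by rewrite -(@pickle_invK V i) -(@pickle_invK V j) Ei Ej.
Qed.

Lemma measurable_fun_discrete {V : countType} (W : T -> V) (G : V -> \bar R)
    (D : set T) :
  (forall v, measurable [set w | W w = v]) -> measurable_fun D (fun w => G (W w)).
Proof.
move=> mW mD B mB.
have -> : (fun w => G (W w)) @^-1` B =
    \bigcup_v (if pselect (B (G v)) is left _ then [set w | W w = v] else set0).
  apply/seteqP; split => w /=.
    by move=> Bw; exists (W w) => //; case: pselect.
  by move=> [v _]; case: pselect => // Bv /= ->.
apply: measurableI => //; apply: countable_bigcupT_measurable.
  exact: countableP.
by move=> v; case: pselect.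
Qed.

Lemma ge0_integral_csum {V : countType} (W : T -> V) (D : set T)
    (f : T -> \bar R) :
  measurable D -> (forall v, measurable [set w | W w = v]) ->
  measurable_fun D f -> (forall x, D x -> 0 <= f x) ->
  \int[mu]_(x in D) f x =
  csum (fun v => \int[mu]_(x in D `&` [set w | W w = v]) f x).
Proof.
move=> mD mW mf f0.
pose H k := if pickle_inv k is Some v then D `&` [set w | W w = v] else set0.
have DH : D = \bigcup_k H k.
  apply/seteqP; split => w /=.
    by move=> Dw; exists (pickle (W w)) => //; rewrite /H pickleK_inv.
  by move=> [k _]; rewrite /H; case: pickle_inv => // v [].
have mH k : measurable (H k).
  by rewrite /H; case: pickle_inv => // ?; exact: measurableI.
rewrite [in LHS]DH ge0_integral_bigcup //; first last.
- move=> i j _ _ [w []]; rewrite /H.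
  case Ei: pickle_inv => [v|//]; case Ej: pickle_inv => [v'|//].
  move=> [_ /= Wv] [_ /= Wv'].
  by rewrite -(@pickle_invK V i) -(@pickle_invK V j) Ei Ej /= -Wv -Wv'.
- by rewrite -DH.
- by rewrite -DH.
rewrite /csum; apply: eq_eseriesr => k _; rewrite /H; case: pickle_inv => //.
by rewrite integral_set0.
Qed.

End DiscretePartition.

Section GaltonWatson.
Context {R : realType} {l : nat} {d : measure_display} {T : measurableType d}.
Variables (P : probability T R) (Y : offidx l -> T -> vecN l) (i0 : 'I_l).
Hypothesis Ymeas : forall (a : offidx l) (y : vecN l), measurable [set w | Y a w = y].
Hypothesis Yindep : mutually_independent P Y.
Local Open Scope ereal_scope.

Definition cylinder (s : seq (offidx l)) (vs : seq (vecN l)) : set T :=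
  [set w | map (Y^~ w) s = vs].

Lemma cylinder_cons a s v vs :
  cylinder (a :: s) (v :: vs) = [set w | Y a w = v] `&` cylinder s vs.
Proof. by apply/seteqP; split => w; rewrite /cylinder /=; case=> -> ->. Qed.

Lemma measurable_cylinder s vs : measurable (cylinder s vs).
Proof.
elim: s vs => [|a s IH] [|v vs].
- by have -> : cylinder [::] [::] = setT by apply/seteqP; split.
- by have -> : cylinder [::] (v :: vs) = set0 by apply/seteqP; split.
- by have -> : cylinder (a :: s) [::] = set0 by apply/seteqP; split.
- by rewrite cylinder_cons; apply: measurableI.
Qed.

Lemma cylinder_cat s1 s2 vs1 vs2 : size vs1 = size s1 ->
  cylinder (s1 ++ s2) (vs1 ++ vs2) = cylinder s1 vs1 `&` cylinder s2 vs2.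
Proof.
move=> sz; apply/seteqP; split => w /=; rewrite /cylinder /= map_cat.
  by move/eqP; rewrite eqseq_cat ?size_map // => /andP[/eqP -> /eqP ->].
by case=> -> ->.
Qed.

Lemma probability_cylinder s vs : uniq s -> size vs = size s ->
  P (cylinder s vs) = \prod_(x <- zip s vs) P [set w | Y x.1 w = x.2].
Proof.
move=> us svs; pose v k := nth zeroN vs (index k s).
have mv : map v s = vs.
  apply: (@eq_from_nth _ zeroN); rewrite size_map // => i ilt.
  by rewrite (nth_map (0%N, i0, 0%N)) // /v index_uniq.
have -> : cylinder s vs = \bigcap_(k in [set k | k \in s]) [set w | Y k w = v k].
  apply/seteqP; split => w; rewrite /cylinder /= -mv.
    by move/eq_in_map => H k ks; exact: H.
  by move=> H; apply/eq_in_map => k ks; exact: H.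
by rewrite Yindep // -mv -[X in zip X _]map_id zip_map big_map.
Qed.

Lemma probability_cylinder_cat s1 s2 vs1 vs2 : uniq (s1 ++ s2) ->
  size vs1 = size s1 -> size vs2 = size s2 ->
  P (cylinder (s1 ++ s2) (vs1 ++ vs2)) = P (cylinder s1 vs1) * P (cylinder s2 vs2).
Proof.
move=> u sz1 sz2; move: (u); rewrite cat_uniq => /and3P[u1 _ u2].
by rewrite !probability_cylinder ?size_cat ?sz1 ?sz2 // zip_cat // big_cat.
Qed.

Definition generation (n : nat) (z : vecN l) : seq (offidx l) :=
  [seq (n, j, i) | j <- index_enum 'I_l, i <- index_iota 0 (z j)].

Lemma generation_uniq n z : uniq (generation n z).
Proof.
apply: allpairs_uniq_dep => [|j _|[j i] [j' i'] _ _ /= [-> ->]] //.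
- exact: index_enum_uniq.
- exact: iota_uniq.
Qed.

Lemma mem_generation {n z a} : a \in generation n z -> a.1.1 = n.
Proof. by move=> /allpairsPdep[j [i [_ _ ->]]]. Qed.

Lemma size_generation n z : size (generation n z) = normN z.
Proof.
rewrite /generation size_allpairs_dep sumnE big_map /normN.
by apply: eq_bigr => j _; rewrite size_iota subn0.
Qed.

Lemma normN_eq0 (y : vecN l) : (normN y == 0)%N = (y == zeroN).
Proof.
apply/idP/eqP => [|->]; last by rewrite /normN big1 // => k _; rewrite ffunE.
rewrite /normN sum_nat_eq0 => /forallP y0.
by apply/ffunP => k; rewrite ffunE; apply/eqP; exact: y0.
Qed.

Definition sumvN (vs : seq (vecN l)) : vecN l := [ffun k => \sum_(v <- vs) v k]%N.

Lemma normN_sumvN vs : normN (sumvN vs) = (\sum_(v <- vs) normN v)%N.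
Proof.
rewrite /normN (eq_bigr (fun k => \sum_(v <- vs) v k)%N) => [|k _].
  exact: exchange_big.
by rewrite ffunE.
Qed.

Lemma GWS n w :
  GW Y i0 n.+1 w = sumvN (map (Y^~ w) (generation n (GW Y i0 n w))).
Proof.
by apply/ffunP => k; rewrite /= !ffunE big_map /generation big_allpairs_dep.
Qed.

Definition GWeq n z : set T := [set w | GW Y i0 n w = z].

Definition GWS_piece n z C cs (zvs : vecN l * seq (vecN l)) : set T :=
  if (sumvN zvs.2 == z) && (size zvs.2 == size (generation n zvs.1))
  then GWeq n zvs.1 `&` cylinder (generation n zvs.1 ++ C) (zvs.2 ++ cs) else set0.

Lemma GWS_pieces_cover n z C cs : size cs = size C ->
  GWeq n.+1 z `&` cylinder C cs = \bigcup_zvs GWS_piece n z C cs zvs.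
Proof.
move=> sz; apply/seteqP; split => w /=.
- move=> [Zw Cw].
  exists (GW Y i0 n w, map (Y^~ w) (generation n (GW Y i0 n w))) => //.
  rewrite /GWS_piece /= -GWS Zw eqxx size_map eqxx /= cylinder_cat ?size_map //.
- move=> [[z' vs] _]; rewrite /GWS_piece /=.
  case: ifPn => // /andP[/eqP <- /eqP svs].
  rewrite cylinder_cat // => -[Zw [Fw Cw]]; split => //.
  by change (GW Y i0 n.+1 w = sumvN vs); rewrite GWS (Zw : GW Y i0 n w = z') -Fw.
Qed.

Lemma GWS_pieces_disj n z C cs zvs zvs' w :
  GWS_piece n z C cs zvs w -> GWS_piece n z C cs zvs' w -> zvs = zvs'.
Proof.
case: zvs zvs' => [z1 vs1] [z2 vs2]; rewrite /GWS_piece /=.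
case: ifPn => // /andP[_ /eqP s1]; case: ifPn => // /andP[_ /eqP s2].
by rewrite !cylinder_cat // => -[<- [<- _]] [<- [<- _]].
Qed.

Definition GWS_mass n z (zvs : vecN l * seq (vecN l)) : \bar R :=
  if (sumvN zvs.2 == z) && (size zvs.2 == size (generation n zvs.1))
  then P (GWeq n zvs.1) * P (cylinder (generation n zvs.1) zvs.2) else 0.

Lemma GWS_mass_ge0 n z zvs : 0 <= GWS_mass n z zvs.
Proof. by rewrite /GWS_mass; case: ifPn => // _; apply: mule_ge0. Qed.

Definition later_cylinder n (C : seq (offidx l)) (cs : seq (vecN l)) :=
  [/\ uniq C, all (fun a => n <= a.1.1)%N C & size cs = size C].

Definition GW_indep_later n := forall z C cs, later_cylinder n C cs ->
  P (GWeq n z `&` cylinder C cs) = P (GWeq n z) * P (cylinder C cs).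

Lemma probability_GWS_cylinder n z C cs :
  (forall z, measurable (GWeq n z)) -> GW_indep_later n ->
  later_cylinder n.+1 C cs ->
  P (GWeq n.+1 z `&` cylinder C cs) = csum (GWS_mass n z) * P (cylinder C cs).
Proof.
move=> mZ iZ [uC gC sz].
have mG zvs : measurable (GWS_piece n z C cs zvs).
  rewrite /GWS_piece; case: ifPn => _; last exact: measurable0.
  by apply: measurableI; [exact: mZ | exact: measurable_cylinder].
rewrite GWS_pieces_cover // measure_bigcup_csum //; last exact: GWS_pieces_disj.
have fc : P (cylinder C cs) \is a fin_num.
  by apply: fin_num_measure; exact: measurable_cylinder.
rewrite -(fineK fc) muleC -csumZl; last exact: GWS_mass_ge0.
congr csum; apply/funext => -[z' vs]; rewrite /GWS_piece /GWS_mass /=.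
case: ifPn => [/andP[_ /eqP svs]|_]; last by rewrite measure0 mule0.
have uFC : uniq (generation n z' ++ C).
  rewrite cat_uniq generation_uniq uC andbT /=; apply/hasPn => a aC.
  apply/negP => /mem_generation an; move/allP: gC => /(_ a aC).
  by rewrite an ltnn.
rewrite fineK // iZ.
  by rewrite probability_cylinder_cat // muleA muleC.
split=> //; last by rewrite !size_cat svs sz.
rewrite all_cat; apply/andP; split; apply/allP => a aX.
  by rewrite (mem_generation aX).
by move/allP: gC => /(_ a aX) /ltnW.
Qed.

Lemma GWeq_measurable_indep n :
  (forall z, measurable (GWeq n z)) /\ GW_indep_later n.
Proof.
elim: n => [|n [mZ iZ]].
  have Z0 z : GWeq 0 z = if ebase i0 == z then setT else set0.
    by apply/seteqP; split => w; rewrite /GWeq /=; case: eqP.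
  split => [z|z C cs _]; rewrite Z0; case: ifPn => _.
  - exact: measurableT.
  - exact: measurable0.
  - by rewrite setTI probability_setT mul1e.
  - by rewrite set0I measure0 mul0e.
have cyl0 : cylinder [::] [::] = setT by apply/seteqP; split.
have PZ z : P (GWeq n.+1 z) = csum (GWS_mass n z).
  have := @probability_GWS_cylinder n z [::] [::] mZ iZ.
  by rewrite cyl0 setIT probability_setT mule1; apply.
split=> [z|z C cs lC].
  rewrite -[GWeq n.+1 z]setIT -cyl0 GWS_pieces_cover //.
  apply: countable_bigcupT_measurable => [|zvs]; first exact: countableP.
  rewrite /GWS_piece; case: ifPn => _; last exact: measurable0.
  by apply: measurableI; [exact: mZ | exact: measurable_cylinder].
by rewrite probability_GWS_cylinder // PZ.
Qed.

Definition invnN (z : vecN l) : R := ((normN z)%:R)^-1%R.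

Lemma invnN_ge0 z : (0 <= invnN z)%R.
Proof. by rewrite invr_ge0 ler0n. Qed.

Lemma measurable_GWeq n z : measurable (GWeq n z).
Proof. exact: (GWeq_measurable_indep n).1. Qed.

Lemma measurable_fun_GW n (f : vecN l -> \bar R) (D : set T) :
  measurable_fun D (fun w => f (GW Y i0 n w)).
Proof. exact/measurable_fun_discrete/measurable_GWeq. Qed.

Lemma invnN_GWS_le n z w (c := ((normN z ^ 2)%N%:R : R)) : GW Y i0 n w = z ->
  (invnN (GW Y i0 n.+1 w) <=
   c^-1 * \sum_(a <- generation n z) invn_dflt c (normN (Y a w)))%R.
Proof.
move=> Zw; rewrite /invnN GWS Zw normN_sumvN /c -(size_generation n z).
have := @invn_sum_le R (map normN (map (Y^~ w) (generation n z))).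
rewrite !size_map big_map => /le_trans->//.
by rewrite -map_comp big_map.
Qed.

Definition EinvZ n := \int[P]_w (invnN (GW Y i0 n w))%:E.

Lemma EinvZ_ge0 n : 0 <= EinvZ n.
Proof. by apply: integral_ge0 => w _; rewrite lee_fin invnN_ge0. Qed.

Lemma EinvZ0 : EinvZ 0 = 1.
Proof.
have n1 : normN (ebase i0) = 1%N.
  rewrite /normN (bigD1 i0) //= ffunE eqxx big1 // => k kn.
  by rewrite ffunE (negbTE kn).
rewrite /EinvZ (eq_integral (cst 1%:E)) => [|w _]; last by rewrite /invnN /= n1 invr1.
by rewrite integral_cst // mul1e; exact: probability_setT.
Qed.

Lemma EinvZ_csum n : EinvZ n = csum (fun z => (invnN z)%:E * P (GWeq n z)).
Proof.
rewrite /EinvZ (ge0_integral_csum _ (GW Y i0 n)) //; last 3 first.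
- exact: measurable_GWeq.
- exact: (measurable_fun_GW n (fun z => (invnN z)%:E)).
- by move=> w _; rewrite lee_fin invnN_ge0.
congr csum; apply/funext => z; rewrite setTI.
rewrite (eq_integral (cst (invnN z)%:E)) => [|w]; last by rewrite inE /= => ->.
by rewrite integral_cst //; exact: measurable_GWeq.
Qed.

Context {p : 'I_l -> vecN l -> R} {K : R}.
Hypothesis Ylaw : forall (n : nat) (j : 'I_l) (i : nat) (y : vecN l),
  P [set w | Y (n, j, i) w = y] = (p j y)%:E.
Hypothesis p_zero : forall j, p j zeroN = 0%R.
Hypothesis EinvY_le : forall j,
  \esum_(y in [set: vecN l]) (p j y * ((normN y)%:R)^-1)%:E <= K%:E.

Lemma integral_offspring_le n z a (c : R) : a \in generation n z -> (0 <= c)%R ->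
  \int[P]_(w in GWeq n z) (invn_dflt c (normN (Y a w)))%:E <= K%:E * P (GWeq n z).
Proof.
case: a => [[n' j] i] aF c0; have /= n'n := mem_generation aF; subst n'.
have p0 y : (0 <= p j y)%R by rewrite -lee_fin -(Ylaw n j i y) measure_ge0.
have h0 (y : vecN l) : (0 <= invn_dflt c (normN y))%R by exact: invn_dflt_ge0.
rewrite (ge0_integral_csum _ (Y (n, j, i))) //; last 3 first.
- exact: measurable_GWeq.
- exact: (measurable_fun_discrete _ (fun y => (invn_dflt c (normN y))%:E) _
    (Ymeas _)).
- by move=> w _; rewrite lee_fin.
have fZ : P (GWeq n z) \is a fin_num by apply/fin_num_measure/measurable_GWeq.
set fP := fine (P (GWeq n z)); have PZ : P (GWeq n z) = fP%:E by rewrite fineK.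
have iZ := (GWeq_measurable_indep n).2.
have cyl1 y : cylinder [:: (n, j, i)] [:: y] = [set w | Y (n, j, i) w = y].
  by rewrite cylinder_cons; apply/seteqP; split=> w //= [].
rewrite (_ : (fun y => _) =
    fun y => fP%:E * (p j y * invn_dflt c (normN y))%:E); last first.
  apply/funext => y.
  rewrite (eq_integral (cst (invn_dflt c (normN y))%:E)) => [|w]; last first.
    by rewrite inE => -[_ /= ->].
  rewrite integral_cst; last exact/measurableI/Ymeas/measurable_GWeq.
  rewrite -cyl1 [X in _ * X]iZ; last by split; rewrite /= ?leqnn.
  by rewrite cyl1 Ylaw PZ -!EFinM mulrCA [(_ * invn_dflt _ _)%R]mulrC.
rewrite csumZl => [|y]; last by rewrite lee_fin mulr_ge0.
rewrite muleC -PZ lee_wpmul2r ?measure_ge0 //.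
rewrite csum_esum => [|y]; last by rewrite lee_fin mulr_ge0.
apply: le_trans (EinvY_le j); apply: le_esum => y _; rewrite lee_fin /invn_dflt.
by rewrite normN_eq0; case: eqP => [->|//]; rewrite p_zero !mul0r.
Qed.

Lemma invnN_sqrE z : invnN z = (((normN z ^ 2)%N%:R)^-1 * (normN z)%:R)%R.
Proof.
rewrite /invnN; case: (posnP (normN z)) => [->|m0]; first by rewrite mulr0 invr0.
by rewrite natrX expr2 invfM -mulrA mulVf ?mulr1 // pnatr_eq0 -lt0n.
Qed.

Lemma integral_GWS_le n z :
  \int[P]_(w in GWeq n z) (invnN (GW Y i0 n.+1 w))%:E <=
  K%:E * ((invnN z)%:E * P (GWeq n z)).
Proof.
set c : R := (normN z ^ 2)%N%:R; have c0 : (0 <= c)%R by rewrite ler0n.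
set h := fun a w => (invn_dflt c (normN (Y a w)))%:E.
have h0 a w : 0 <= h a w by rewrite lee_fin invn_dflt_ge0.
have mh a : measurable_fun (GWeq n z) (h a).
  exact: (measurable_fun_discrete _ (fun y => (invn_dflt c (normN y))%:E) _
    (Ymeas a)).
have mZ := measurable_GWeq n z.
apply: (@le_trans _ _
    (\int[P]_(w in GWeq n z) (c^-1%:E * \sum_(a <- generation n z) h a w))).
  apply: ge0_le_integral => //.
  - by move=> w _; rewrite lee_fin invnN_ge0.
  - exact: (measurable_fun_GW n.+1 (fun z => (invnN z)%:E)).
  - exact/measurable_funeM/emeasurable_sum.
  - by move=> w Zw; rewrite /h sumEFin -EFinM lee_fin; exact: invnN_GWS_le.
rewrite ge0_integralZl //; last 3 first.
- exact: emeasurable_sum.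
- by move=> w _; rewrite sume_ge0.
- by rewrite lee_fin invr_ge0.
rewrite ge0_integral_sum // big_seq.
apply: (@le_trans _ _ (c^-1%:E * \sum_(a <- generation n z | a \in generation n z)
    (K%:E * P (GWeq n z)))).
  apply: lee_wpmul2l; first by rewrite lee_fin invr_ge0.
  by apply: lee_sum => a ain; exact: integral_offspring_le.
have fZ : P (GWeq n z) \is a fin_num by exact: fin_num_measure.
rewrite -big_seq -(fineK fZ) -EFinM sumEFin big_const_seq count_predT iter_addr_0.
rewrite size_generation -!EFinM lee_fin invnN_sqrE -/c.
by rewrite -mulr_natr le_eqVlt; apply/predU1l; ring.
Qed.

Lemma EinvZS_le n : EinvZ n.+1 <= K%:E * EinvZ n.
Proof.
rewrite (EinvZ_csum n) -csumZl => [|z]; last first.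
  by rewrite mule_ge0 ?lee_fin ?invnN_ge0.
rewrite /EinvZ (ge0_integral_csum _ (GW Y i0 n)) //; last 3 first.
- exact: measurable_GWeq.
- exact: (measurable_fun_GW n.+1 (fun z => (invnN z)%:E)).
- by move=> w _; rewrite lee_fin invnN_ge0.
apply: le_csum => z; first by apply: integral_ge0 => w _; rewrite lee_fin invnN_ge0.
by rewrite setTI; exact: integral_GWS_le.
Qed.

Lemma K_ge0 (j : 'I_l) : (0 <= K)%R.
Proof.
rewrite -lee_fin; apply: le_trans (EinvY_le j); apply: esum_ge0 => y _.
by rewrite lee_fin mulr_ge0 ?invr_ge0 // -(lee_fin) -(Ylaw 0 j 0) measure_ge0.
Qed.

Lemma EinvZ_le_expr n : EinvZ n <= (K ^+ n)%:E.
Proof.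
elim: n => [|n IH]; first by rewrite EinvZ0 expr0.
apply: le_trans (EinvZS_le n) _.
by rewrite exprS EFinM lee_wpmul2l // lee_fin (K_ge0 i0).
Qed.

End GaltonWatson.

Section GeometricDecay.
Context {R : realType}.

Lemma powR_mul_lt1 (rho K alpha : R) : 1 < rho -> 0 <= K ->
  alpha < - (ln K / ln rho) -> rho `^ alpha * K < 1.
Proof.
move=> rho1 K0 alphaK.
have [->|Kn0] := eqVneq K 0; first by rewrite mulr0.
have K_gt0 : 0 < K by rewrite lt_neqAle eq_sym Kn0.
have lnrho0 : 0 < ln rho by exact: ln_gt0.
have rho0 : 0 < rho by exact: lt_trans rho1.
rewrite -[_ * K]lnK ?posrE ?mulr_gt0 ?powR_gt0 // -expR0 ltr_expR.
rewrite lnM ?posrE ?powR_gt0 // ln_powR.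
move: alphaK; rewrite -mulNr ltr_pdivlMr //; lra.
Qed.

Lemma cvg_powR_mul_le_expr (rho alpha K : R) (u : nat -> \bar R) :
  0 <= rho -> rho `^ alpha * K < 1 -> (forall n, 0 <= u n <= (K ^+ n)%:E)%E ->
  (fun n => (rho `^ (alpha * n%:R))%:E * u n)%E @ \oo --> 0%:E.
Proof.
move=> rho0 q1 u_bnd.
have K0 : 0 <= K by have /andP[u0 /(le_trans u0)] := u_bnd 1%N; rewrite expr1 lee_fin.
have ufin n : u n \is a fin_num.
  by have /andP[u0 uK] := u_bnd n; rewrite ge0_fin_numE // (le_lt_trans uK) ?ltry.
pose v n := rho `^ (alpha * n%:R) * fine (u n).
have -> : (fun n => (rho `^ (alpha * n%:R))%:E * u n)%E = fun n => (v n)%:E.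
  by apply/funext => n; rewrite EFinM fineK.
apply: cvg_EFin; first exact: nearW.
have q0 : 0 <= rho `^ alpha * K by rewrite mulr_ge0 ?powR_ge0.
have v_bnd n : 0 <= v n <= (rho `^ alpha * K) ^+ n.
  have /andP[u0 uK] := u_bnd n; rewrite -(fineK (ufin n)) !lee_fin in u0 uK.
  rewrite /v mulr_ge0 ?powR_ge0 //= powRrM powR_mulrn ?powR_ge0 // exprMn.
  by rewrite ler_wpM2l ?exprn_ge0 ?powR_ge0.
rewrite (_ : fine \o _ = v) //.
apply: (@squeeze_cvgr _ _ _ _ (fun=> 0) (fun n => (rho `^ alpha * K) ^+ n) v _ 0).
- by apply: filterE => n; exact: v_bnd.
- by apply/cvgrPdist_lt => e e0; apply: filterE => n; rewrite subrr normr0.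
- by apply: cvg_expr; rewrite ger0_norm.
Qed.

End GeometricDecay.

(* Only [p_j(0) = 0] from A1, [rho > 1] and A3 enter the proof. *)
Theorem lemma3p2 (R : realType) (l : nat) (hl : (2 <= l)%N)
  (d : measure_display) (T : measurableType d) (P : probability T R)
  (p : 'I_l -> vecN l -> R)
  (Y : offidx l -> T -> vecN l)
  (Ymeas : forall (a : offidx l) (y : vecN l), measurable [set w | Y a w = y])
  (Ylaw : forall (n : nat) (j : 'I_l) (i : nat) (y : vecN l),
      P [set w | Y (n, j, i) w = y] = (p j y)%:E)
  (Yindep : mutually_independent P Y)
  (i0 : 'I_l)
  (A1a : forall j, p j zeroN = 0)
  (A1b : forall j, \sum_(k < l) p j (ebase k) < 1)
  (M : 'M[R]_l)
  (HM : forall i k,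
      (\esum_(y in [set: vecN l]) ((p i y) * (y k)%:R)%:E)%E = (M i k)%:E)
  (rho : R)
  (A2a : positively_regular M)
  (A2b : largest_eigenvalue M rho)
  (A2c : 1 < rho)
  (K : R)
  (A3 : forall i,
      (\esum_(y in [set: vecN l]) ((p i y) * ((normN y)%:R)^-1)%:E <= K%:E)%E)
  (HK : K < 1)
  (alpha : R) (Halpha0 : 0 < alpha) (Halpha1 : alpha < - (ln K / ln rho)) :
  (fun n : nat =>
     ((rho `^ (alpha * n%:R))%:E *
      'E_P[fun w => (((normN (GW Y i0 n w))%:R)^-1)%R])%E)
    @ \oo --> 0%:E.
Proof.
have K0 := K_ge0 P Y Ylaw A3 i0.
rewrite unlock; apply: (@cvg_powR_mul_le_expr _ _ _ _ (EinvZ P Y i0)).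
- exact/ltW/(lt_trans ltr01 A2c).
- exact: powR_mul_lt1 A2c K0 Halpha1.
- by move=> n; rewrite EinvZ_ge0; apply: EinvZ_le_expr.
Qed.
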